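(* Let $n,m$ be positive integers and $s$ a real number with $0\le s\le n$. Define $$g(\alpha)=\sum_{i=1}^n\Big(2i\alpha_i+m\big(\alpha_i+1-\tfrac{s}{n}\big)^+\Big)$$ on the polytope $\mathcal{P}=\{\alpha\in\mathbb{R}^n:\ \tfrac{s}{n}\ge\alpha_1\ge\alpha_2\ge\cdots\ge\alpha_n,\ \sum_{i=1}^n\alpha_i=0\}$. If $m\ge 2(\lceil s\rceil-1)$, then $$\min_{\alpha\in\mathcal{P}}g(\alpha)=d^*(s):=-(m+n-2\lfloor s\rfloor-1)s+mn-\lfloor s\rfloor(\lfloor s\rfloor+1).$$
   Context: $(x)^+=\max(0,x)$. The function $d^*$ takes the value $(n-s)(m-s)$ at integers $s$ and is linear in between. *)

From Stdlib Require Import Reals Lra Lia ZArith Arith.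
Open Scope R_scope.

Definition posp (x : R) : R := Rmax 0 x.

(* floor and ceiling of a real number. Int_part x = up x - 1 is the floor. *)
Definition Rfloor (x : R) : R := IZR (Int_part x).
Definition Rceil (x : R) : R := - Rfloor (- x).

(* sum_{i=1}^n f i  (for n >= 1) *)
Definition sum1n (n : nat) (f : nat -> R) : R :=
  sum_f_R0 (fun k => f (S k)) (pred n).

(* vectors alpha in R^n are modelled as alpha : nat -> R, using alpha 1..alpha n *)
Definition polytopeP (n : nat) (s : R) (alpha : nat -> R) : Prop :=
  s / INR n >= alpha 1%nat /\
  (forall i : nat, (1 <= i < n)%nat -> alpha i >= alpha (S i)) /\
  sum1n n alpha = 0.

Definition gfun (n m : nat) (s : R) (alpha : nat -> R) : R :=
  sum1n n (fun i => 2 * INR i * alpha i + INR m * posp (alpha i + 1 - s / INR n)).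

Definition dstar (n m : nat) (s : R) : R :=
  - (INR m + INR n - 2 * Rfloor s - 1) * s + INR m * INR n
  - Rfloor s * (Rfloor s + 1).

From Stdlib Require Import Reals Lra Lia ZArith Arith.
Open Scope R_scope.

(* Write t = s/n and choose the integer K with K <= s <= K + 1 and m >= 2K (possible because
   m >= 2(ceil s - 1)); put p = n - K >= 1. Every summand of g is bounded below by the affine
   function lam * alpha_i + c_i with lam = m + 2p, using alpha_i <= t for the first p indices and,
   for the last K indices, the bound m x^+ >= (m - 2r) x with 0 <= m - 2r <= m. Since the alpha_i
   sum to 0, g >= sum_i c_i = d*(s). All these bounds are tight at the vertex
   (t, ..., t, t - (s - K), t - 1, ..., t - 1) of the polytope. *)

Fixpoint sum_to (N : nat) (f : nat -> R) : R :=
  match N with O => 0 | S N' => sum_to N' f + f (S N') end.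

Lemma sum1n_sum_to n f : (0 < n)%nat -> sum1n n f = sum_to n f.
Proof.
  intros hn. destruct n as [|n]; [lia|]. unfold sum1n; simpl pred.
  induction n as [|n IH]; simpl; [ring|].
  simpl in IH. rewrite IH by lia. reflexivity.
Qed.

Lemma sum_to_ext N f g :
  (forall i, (1 <= i <= N)%nat -> f i = g i) -> sum_to N f = sum_to N g.
Proof.
  induction N as [|N IH]; intros H; simpl; [reflexivity|].
  rewrite IH by (intros; apply H; lia). rewrite H by lia. reflexivity.
Qed.

Lemma sum_to_ge N f g :
  (forall i, (1 <= i <= N)%nat -> f i >= g i) -> sum_to N f >= sum_to N g.
Proof.
  induction N as [|N IH]; intros H; simpl; [lra|].
  assert (sum_to N f >= sum_to N g) by (apply IH; intros; apply H; lia).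
  assert (f (S N) >= g (S N)) by (apply H; lia).
  lra.
Qed.

Lemma sum_to_linear N a f g :
  sum_to N (fun i => a * f i + g i) = a * sum_to N f + sum_to N g.
Proof. induction N as [|N IH]; simpl; [ring|]. rewrite IH. ring. Qed.

Lemma sum_to_add_range M N f :
  sum_to (M + N) f = sum_to M f + sum_to N (fun r => f (M + r)%nat).
Proof.
  induction N as [|N IH]; simpl.
  - rewrite Nat.add_0_r. ring.
  - rewrite <- plus_n_Sm. simpl. rewrite IH. ring.
Qed.

Lemma sum_to_const N c : sum_to N (fun _ => c) = INR N * c.
Proof.
  induction N as [|N IH]; cbn [sum_to]; [rewrite Rmult_0_l; reflexivity|].
  rewrite IH, S_INR. ring.
Qed.

Lemma sum_to_affine N a b :
  sum_to N (fun i => a * INR i + b) = a * (INR N * (INR N + 1) / 2) + INR N * b.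
Proof.
  induction N as [|N IH]; cbn [sum_to]; [change (INR 0) with 0; field|].
  rewrite IH, S_INR. field.
Qed.

Lemma posp_ge_scaled c M x : 0 <= c <= M -> M * posp x >= c * x.
Proof.
  intros Hc. unfold posp, Rmax. destruct (Rle_dec 0 x).
  - assert (0 <= (M - c) * x) by (apply Rmult_le_pos; lra). lra.
  - assert (0 <= c * - x) by (apply Rmult_le_pos; lra). lra.
Qed.

Lemma posp_id x : 0 <= x -> posp x = x.
Proof. intros. unfold posp, Rmax. destruct (Rle_dec 0 x); lra. Qed.

Lemma polytopeP_le n s a :
  polytopeP n s a -> forall i, (1 <= i <= n)%nat -> a i <= s / INR n.
Proof.
  intros [Hfirst [Hmono _]] i Hi. induction i as [|i IH]; [lia|].
  destruct i as [|i]; [lra|].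
  assert (a (S i) >= a (S (S i))) by (apply Hmono; lia).
  assert (a (S i) <= s / INR n) by (apply IH; lia).
  lra.
Qed.

(* [dstar n m s] is [dpiece n m (Rfloor s) s] by conversion. *)
Definition dpiece (n m : nat) (k s : R) : R :=
  - (INR m + INR n - 2 * k - 1) * s + INR m * INR n - k * (k + 1).

Lemma Rfloor_bounds s : Rfloor s <= s < Rfloor s + 1.
Proof. destruct (base_Int_part s). unfold Rfloor. lra. Qed.

Lemma dstar_on_unit_interval n m s (K : nat) :
  INR K <= s <= INR K + 1 -> dstar n m s = dpiece n m (INR K) s.
Proof.
  intros HK. change (dstar n m s) with (dpiece n m (Rfloor s) s).
  pose proof (Rfloor_bounds s) as Hfl. unfold Rfloor in *.
  rewrite INR_IZR_INZ in *.
  assert (Hz : Int_part s = Z.of_nat K \/ Int_part s = (Z.of_nat K + 1)%Z).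
  { assert (Z.of_nat K - 1 < Int_part s)%Z by (apply lt_IZR; rewrite minus_IZR; lra).
    assert (Int_part s <= Z.of_nat K + 1)%Z by (apply le_IZR; rewrite plus_IZR; lra).
    lia. }
  destruct Hz as [Hz | Hz]; rewrite Hz in Hfl |- *; [reflexivity|].
  rewrite plus_IZR in *.
  (* the floor jumps only at the integer [s = K + 1], where both affine pieces agree *)
  assert (Hs : s = IZR (Z.of_nat K) + 1) by lra.
  rewrite Hs. unfold dpiece. ring.
Qed.

Lemma exists_unit_interval n m s :
  (0 < n)%nat -> 0 <= s <= INR n -> INR m >= 2 * (Rceil s - 1) ->
  exists K : nat, (K < n)%nat /\ INR K <= s <= INR K + 1 /\ 2 * INR K <= INR m.
Proof.
  intros hn Hs Hm.
  pose proof (Rfloor_bounds (- s)) as Hfl.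
  assert (Hc : Rceil s = IZR (- Int_part (- s)))
    by (unfold Rceil, Rfloor; rewrite opp_IZR; reflexivity).
  rewrite Hc in Hm. unfold Rfloor in Hfl.
  set (c := (- Int_part (- s))%Z) in *.
  assert (Hc' : IZR c = - IZR (Int_part (- s))) by (unfold c; apply opp_IZR).
  destruct (Z_le_gt_dec c 0) as [Hc0 | Hc0].
  - exists 0%nat. simpl. pose proof (pos_INR m).
    assert (IZR c <= 0) by (apply IZR_le; lia).
    split; [lia | lra].
  - exists (Z.to_nat (c - 1)).
    assert (HK : INR (Z.to_nat (c - 1)) = IZR c - 1)
      by (rewrite INR_IZR_INZ, Z2Nat.id, minus_IZR by lia; reflexivity).
    rewrite HK. split; [|lra].
    apply INR_lt. rewrite HK. lra.
Qed.

Section Minimum.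

Variables (q K m : nat) (s : R).
Hypotheses (hK : INR K <= s <= INR K + 1) (hmK : 2 * INR K <= INR m).

Let p := S q.
Let n := (p + K)%nat.
Let t := s / INR n.
Let lam := INR m + 2 * INR p.

Lemma INR_n_mul_t : INR n * t = s.
Proof. unfold t. field. apply not_0_INR. unfold n, p. lia. Qed.

Definition term (i : nat) (a : R) : R := 2 * INR i * a + INR m * posp (a + 1 - t).
Definition head (i : nat) : R := INR m * (1 - t) - 2 * (INR p - INR i) * t.
Definition tail (r : nat) : R := (INR m - 2 * INR r) * (1 - t).
Definition baseline : R := sum_to p head + sum_to K tail.

Lemma term_ge_head i a : (i <= p)%nat -> a <= t -> term i a >= lam * a + head i.
Proof.
  intros Hi Ha. apply le_INR in Hi. unfold term, head, lam.
  assert (INR m * posp (a + 1 - t) >= INR m * (a + 1 - t))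
    by (apply posp_ge_scaled; pose proof (pos_INR m); lra).
  assert (0 <= (INR p - INR i) * (t - a)) by (apply Rmult_le_pos; lra).
  lra.
Qed.

Lemma term_ge_tail r a : (r <= K)%nat -> term (p + r) a >= lam * a + tail r.
Proof.
  intros Hr. apply le_INR in Hr. unfold term, tail, lam. rewrite plus_INR.
  assert (INR m * posp (a + 1 - t) >= (INR m - 2 * INR r) * (a + 1 - t))
    by (apply posp_ge_scaled; pose proof (pos_INR r); lra).
  lra.
Qed.

Lemma term_eq_head i a :
  0 <= a + 1 - t -> (INR p - INR i) * (t - a) = 0 -> term i a = lam * a + head i.
Proof.
  intros Hx Hgap. unfold term, head, lam. rewrite posp_id by exact Hx. lra.
Qed.

Lemma term_eq_tail r : term (p + r) (t - 1) = lam * (t - 1) + tail r.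
Proof.
  unfold term, tail, lam. rewrite plus_INR.
  replace (t - 1 + 1 - t) with 0 by ring. rewrite posp_id by lra. ring.
Qed.

Lemma baseline_eq : baseline = dpiece n m (INR K) s.
Proof.
  unfold baseline, dpiece.
  rewrite (sum_to_ext p head (fun i => 2 * t * INR i + (INR m * (1 - t) - 2 * INR p * t)))
    by (intros; unfold head; ring).
  rewrite (sum_to_ext K tail (fun r => - 2 * (1 - t) * INR r + INR m * (1 - t)))
    by (intros; unfold tail; ring).
  rewrite !sum_to_affine, <- INR_n_mul_t.
  unfold n. rewrite plus_INR. field.
Qed.

Lemma gfun_ge a :
  (forall i, (1 <= i <= n)%nat -> a i <= t) -> gfun n m s a >= lam * sum_to n a + baseline.
Proof.
  intros Ha. unfold gfun. rewrite sum1n_sum_to by (unfold n, p; lia).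
  change (fun i => _) with (fun i => term i (a i)).
  unfold n at 1. rewrite sum_to_add_range.
  change (sum_to n a) with (sum_to (p + K) a). rewrite sum_to_add_range.
  assert (sum_to p (fun i => term i (a i)) >= sum_to p (fun i => lam * a i + head i)).
  { apply sum_to_ge. intros i Hi. apply term_ge_head; [lia | apply Ha; unfold n; lia]. }
  assert (sum_to K (fun r => term (p + r) (a (p + r)%nat))
          >= sum_to K (fun r => lam * a (p + r)%nat + tail r)).
  { apply sum_to_ge. intros r Hr. apply term_ge_tail; lia. }
  rewrite !sum_to_linear in *. unfold baseline. lra.
Qed.

Definition minimizer (i : nat) : R :=
  if (i <=? q)%nat then t else if (i =? p)%nat then t - (s - INR K) else t - 1.

Lemma minimizer_le i : minimizer i <= t.
Proof.
  unfold minimizer. destruct (i <=? q)%nat; [lra|]. destruct (i =? p)%nat; lra.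
Qed.

Lemma minimizer_head i :
  (i <= p)%nat -> 0 <= minimizer i + 1 - t /\ (INR p - INR i) * (t - minimizer i) = 0.
Proof.
  intros Hi. unfold minimizer.
  destruct (Nat.leb_spec i q).
  - split; [lra | ring].
  - assert (i = p) by (unfold p; lia). subst i. rewrite Nat.eqb_refl.
    split; [lra | ring].
Qed.

Lemma minimizer_tail r : (1 <= r)%nat -> minimizer (p + r) = t - 1.
Proof.
  intros Hr. unfold minimizer, p.
  destruct (Nat.leb_spec (S q + r) q), (Nat.eqb_spec (S q + r) (S q)); lia || reflexivity.
Qed.

Lemma sum_minimizer : sum_to n minimizer = 0.
Proof.
  unfold n. rewrite sum_to_add_range. unfold p. cbn [sum_to].
  rewrite (sum_to_ext q minimizer (fun _ => t))
    by (intros i Hi; unfold minimizer; destruct (Nat.leb_spec i q); [reflexivity | lia]).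
  rewrite (sum_to_ext K (fun r => minimizer (S q + r)) (fun _ => t - 1))
    by (intros r Hr; apply minimizer_tail; lia).
  replace (minimizer (S q)) with (t - (s - INR K))
    by (unfold minimizer, p; destruct (Nat.leb_spec (S q) q); [lia|];
        rewrite Nat.eqb_refl; reflexivity).
  rewrite !sum_to_const.
  pose proof INR_n_mul_t as Hnt. unfold n, p in Hnt. rewrite plus_INR, S_INR in Hnt.
  lra.
Qed.

Lemma minimizer_polytope : polytopeP n s minimizer.
Proof.
  split; [|split].
  - pose proof (minimizer_le 1). unfold t in *. lra.
  - intros i Hi. unfold minimizer.
    destruct (Nat.leb_spec i q), (Nat.eqb_spec i p), (Nat.leb_spec (S i) q), (Nat.eqb_spec (S i) p);
      unfold p in *; try lia; lra.
  - rewrite sum1n_sum_to by (unfold n, p; lia). exact sum_minimizer.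
Qed.

Lemma gfun_minimizer : gfun n m s minimizer = lam * sum_to n minimizer + baseline.
Proof.
  unfold gfun. rewrite sum1n_sum_to by (unfold n, p; lia).
  change (fun i => _) with (fun i => term i (minimizer i)).
  unfold n at 1. rewrite sum_to_add_range.
  change (sum_to n minimizer) with (sum_to (p + K) minimizer). rewrite sum_to_add_range.
  rewrite (sum_to_ext p (fun i => term i (minimizer i)) (fun i => lam * minimizer i + head i)).
  2: { intros i Hi. apply term_eq_head; apply minimizer_head; lia. }
  rewrite (sum_to_ext K (fun r => term (p + r) (minimizer (p + r)))
             (fun r => lam * minimizer (p + r)%nat + tail r)).
  2: { intros r Hr. rewrite minimizer_tail by lia. apply term_eq_tail. }
  rewrite !sum_to_linear. unfold baseline. ring.
Qed.

Lemma dpiece_minimum :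
  (exists a, polytopeP n s a /\ gfun n m s a = dpiece n m (INR K) s) /\
  (forall a, polytopeP n s a -> gfun n m s a >= dpiece n m (INR K) s).
Proof.
  rewrite <- baseline_eq. split.
  - exists minimizer. split; [exact minimizer_polytope|].
    rewrite gfun_minimizer, sum_minimizer. ring.
  - intros a Ha. pose proof (gfun_ge a (polytopeP_le n s a Ha)) as Hge.
    destruct Ha as [_ [_ Hsum]]. rewrite sum1n_sum_to in Hsum by (unfold n, p; lia).
    rewrite Hsum in Hge. lra.
Qed.

End Minimum.

Theorem mainTheorem4 (n m : nat) (s : R)
  (hn : (0 < n)%nat) (hm : (0 < m)%nat)
  (hs0 : 0 <= s) (hsn : s <= INR n)
  (hms : INR m >= 2 * (Rceil s - 1)) :
  (exists alpha : nat -> R, polytopeP n s alpha /\ gfun n m s alpha = dstar n m s) /\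
  (forall alpha : nat -> R, polytopeP n s alpha -> gfun n m s alpha >= dstar n m s).
Proof.
  destruct (exists_unit_interval n m s hn (conj hs0 hsn) hms) as [K [HKn [HK HmK]]].
  rewrite (dstar_on_unit_interval n m s K HK).
  replace n with (S (n - K - 1) + K)%nat by lia.
  exact (dpiece_minimum (n - K - 1) K m s HK HmK).
Qed.
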